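(* For a monoid $H$, the following are equivalent: (a) $H$ is aperiodic; (b) $\mathcal{P}_{\mathrm{fin},1}(H)$ is BF-atomic; (c) $\mathcal{P}_{\mathrm{fin},1}(H)$ is BF; (d) $\mathcal{P}_{\mathrm{fin},1}(H)$ is FF; (e) $\mathcal{P}_{\mathrm{fin},1}(H)$ is FF-atomic.
   Context: A monoid $H$ is aperiodic if every element $x\neq 1_H$ generates an infinite submonoid. $\mathcal{P}_{\mathrm{fin},1}(H)$ denotes the set of all non-empty finite subsets of $H$ containing $1_H$, a monoid under $XY=\{xy:x\in X,y\in Y\}$. In a monoid $M$: $x\mid_M y$ iff $y\in MxM$; $x,y$ are associated if each divides the other; $x$ properly divides $y$ if $x\mid_M y$ and $y\nmid_M x$. A unit-divisor is an element dividing $1_M$; other elements are non-unit-divisors. An irreducible is a non-unit-divisor $a$ with $a\neq xy$ for all non-unit-divisors $x,y$ properly dividing $a$; an atom is a non-unit-divisor that is not a product of two non-unit-divisors. A factorization (resp. atomic factorization) of $x$ is a finite word over the irreducibles (resp. atoms) whose product is $x$; its length is the number of letters. Two words are equivalent if each is, up to associatedness of letters, a subword of a permutation of the other. $M$ is BF if every non-unit-divisor has a factorization into irreducibles and, for each element, the set of lengths of its factorizations is bounded; FF if every non-unit-divisor has a factorization and each element has only finitely many pairwise inequivalent factorizations. BF-atomic and FF-atomic are defined identically with atoms and atomic factorizations in place of irreducibles and factorizations. *)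

From Stdlib Require Import List Permutation.
Import ListNotations.
Set Implicit Arguments.

Record Monoid := {
  mcar :> Type;
  mmul : mcar -> mcar -> mcar;
  mone : mcar;
  mmulA : forall x y z, mmul x (mmul y z) = mmul (mmul x y) z;
  mmul1 : forall x, mmul mone x = x;
  mmulm1 : forall x, mmul x mone = x
}.

Definition finite_set (T : Type) (S : T -> Prop) : Prop :=
  exists l : list T, forall y, S y -> In y l.

Fixpoint mpow (H : Monoid) (x : H) (n : nat) : H :=
  match n with 0 => mone H | S n => mmul H x (@mpow H x n) end.

Definition aperiodic (H : Monoid) : Prop :=
  forall x : H, x <> mone H -> ~ finite_set (fun y => exists n, y = @mpow H x n).

Definition Pfin1 (H : Monoid) : Type :=
  { X : H -> Prop | finite_set X /\ X (mone H) }.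

Definition setmul (H : Monoid) (X Y : H -> Prop) : H -> Prop :=
  fun z => exists x y, X x /\ Y y /\ z = mmul H x y.

Lemma setmul_fin1 (H : Monoid) (X Y : H -> Prop) :
  finite_set X /\ X (mone H) -> finite_set Y /\ Y (mone H) ->
  finite_set (@setmul H X Y) /\ @setmul H X Y (mone H).
Proof.
  intros [[lx Hx] X1] [[ly Hy] Y1]; split.
  - exists (map (fun p => mmul H (fst p) (snd p)) (list_prod lx ly)).
    intros z [x [y [Xx [Yy ->]]]].
    apply in_map_iff; exists (x, y); split; [reflexivity|].
    apply in_prod; auto.
  - exists (mone H), (mone H); repeat split; auto. symmetry; apply mmul1.
Qed.

Definition Pmul (H : Monoid) (X Y : Pfin1 H) : Pfin1 H :=
  exist _ (@setmul H (proj1_sig X) (proj1_sig Y)) (@setmul_fin1 H _ _ (proj2_sig X) (proj2_sig Y)).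

Lemma one_fin1 (H : Monoid) :
  finite_set (fun y : H => y = mone H) /\ (fun y : H => y = mone H) (mone H).
Proof. split; [exists [mone H]; intros y ->; left; reflexivity | reflexivity]. Qed.

Definition Pone (H : Monoid) : Pfin1 H := exist _ (fun y => y = mone H) (one_fin1 H).

Section Fact.
Variables (M : Type) (mul : M -> M -> M) (one : M).

Definition mdivides (x y : M) : Prop := exists a b, y = mul (mul a x) b.
Definition massoc (x y : M) : Prop := mdivides x y /\ mdivides y x.
Definition pdivides (x y : M) : Prop := mdivides x y /\ ~ mdivides y x.
Definition unit_divisor (x : M) : Prop := mdivides x one.

Definition irreducible (a : M) : Prop :=
  ~ unit_divisor a /\
  forall x y, ~ unit_divisor x -> ~ unit_divisor y ->
    pdivides x a -> pdivides y a -> a <> mul x y.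

Definition atom (a : M) : Prop :=
  ~ unit_divisor a /\
  forall x y, ~ unit_divisor x -> ~ unit_divisor y -> a <> mul x y.

Definition wprod (w : list M) : M := fold_right mul one w.

Definition factorization (P : M -> Prop) (x : M) (w : list M) : Prop :=
  Forall P w /\ wprod w = x.

Inductive subword : list M -> list M -> Prop :=
| sw_nil : subword [] []
| sw_skip : forall a u v, subword u v -> subword u (a :: v)
| sw_keep : forall a u v, subword u v -> subword (a :: u) (a :: v).

Definition sub_perm_assoc (u v : list M) : Prop :=
  exists w s, Permutation v w /\ subword s w /\ Forall2 massoc u s.

Definition wequiv (u v : list M) : Prop := sub_perm_assoc u v /\ sub_perm_assoc v u.

Definition BF_wrt (P : M -> Prop) : Prop :=
  (forall x, ~ unit_divisor x -> exists w, factorization P x w) /\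
  (forall x, exists N, forall w, factorization P x w -> length w <= N).

Definition FF_wrt (P : M -> Prop) : Prop :=
  (forall x, ~ unit_divisor x -> exists w, factorization P x w) /\
  (forall x, exists L : list (list M),
      Forall (factorization P x) L /\
      forall w, factorization P x w -> exists w', In w' L /\ wequiv w w').

Definition BF := BF_wrt irreducible.
Definition FF := FF_wrt irreducible.
Definition BF_atomic := BF_wrt atom.
Definition FF_atomic := FF_wrt atom.
End Fact.

From Stdlib Require Import List Permutation Lia Wf_nat Classical ClassicalEpsilon
  FunctionalExtensionality PropExtensionality.
Import ListNotations.
Set Implicit Arguments.

(* If H is aperiodic, multiplying a set X in P_fin,1(H) by a nonunit A strictly
   enlarges it: otherwise a X ⊆ X for some a ≠ 1 in A, and since 1 ∈ X the finite
   set X would contain every power of a.  Hence a factorization of X has at most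
   |X| letters, all of them subsets of X, so there are finitely many factorizations;
   the same strict growth makes induction on |X| produce atomic factorizations.
   Conversely, if some x ≠ 1 has finitely many powers, the set S of these powers is
   an idempotent nonunit, and repeating any factorization w of S gives the
   factorizations w, ww, www, ... of S, of unbounded length. *)

Definition classicb (P : Prop) : bool :=
  if excluded_middle_informative P then true else false.

Lemma classicbP (P : Prop) : reflect P (classicb P).
Proof. unfold classicb; destruct excluded_middle_informative; constructor; assumption. Qed.

Section Factorizations.
Variables (M : Type) (mul : M -> M -> M) (one : M).

Lemma subword_length (u v : list M) : subword u v -> length u <= length v.
Proof. induction 1; simpl; lia. Qed.

Lemma sub_perm_assoc_length (u v : list M) :
  sub_perm_assoc mul u v -> length u <= length v.
Proof.
  intros (w & s & Hperm & Hsub & Hassoc).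
  rewrite (Forall2_length Hassoc), (Permutation_length Hperm).
  now apply subword_length.
Qed.

Lemma FF_wrt_BF_wrt (P : M -> Prop) : FF_wrt mul one P -> BF_wrt mul one P.
Proof.
  intros [Hex Hfin]; split; [exact Hex|].
  intros x; destruct (Hfin x) as (L & _ & HL).
  exists (list_max (map (@length M) L)); intros w Hw.
  destruct (HL w Hw) as (w' & Hw' & Hequiv & _).
  transitivity (length w'); [now apply sub_perm_assoc_length|].
  apply (proj1 (Forall_forall _ _) (proj1 (list_max_le _ _) (le_n _))).
  now apply in_map.
Qed.

Lemma atom_irreducible (a : M) : atom mul one a -> irreducible mul one a.
Proof. intros [Ha Hat]; split; [exact Ha|]; intros x y Hx Hy _ _; exact (Hat x y Hx Hy). Qed.

Lemma not_atom_split (x : M) :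
  ~ unit_divisor mul one x -> ~ atom mul one x ->
  exists a b, ~ unit_divisor mul one a /\ ~ unit_divisor mul one b /\ x = mul a b.
Proof.
  intros Hx Hnat; apply NNPP; intros Hsplit; apply Hnat; split; [exact Hx|].
  intros a b Ha Hb ->; apply Hsplit; eauto.
Qed.

Hypothesis mulA : forall x y z, mul x (mul y z) = mul (mul x y) z.
Hypothesis mul1l : forall x, mul one x = x.
Hypothesis mul1r : forall x, mul x one = x.

Lemma wprod_app (u v : list M) :
  wprod mul one (u ++ v) = mul (wprod mul one u) (wprod mul one v).
Proof. induction u as [|a u IH]; simpl; [now rewrite mul1l | now rewrite IH, mulA]. Qed.

Lemma unit_divisor_one : unit_divisor mul one one.
Proof. exists one, one; now rewrite !mul1l. Qed.

Lemma massoc_refl (x : M) : massoc mul x x.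
Proof. split; exists one, one; now rewrite mul1l, mul1r. Qed.

Lemma wequiv_refl (w : list M) : wequiv mul w w.
Proof.
  assert (Hw : sub_perm_assoc mul w w).
  { exists w, w; split; [reflexivity|split].
    - induction w; [apply sw_nil | apply sw_keep; assumption].
    - induction w; constructor; [apply massoc_refl | assumption]. }
  split; exact Hw.
Qed.

Lemma FF_wrt_of_finitely_many (P : M -> Prop) :
  (forall x, ~ unit_divisor mul one x -> exists w, factorization mul one P x w) ->
  (forall x, exists L, forall w, factorization mul one P x w -> In w L) ->
  FF_wrt mul one P.
Proof.
  intros Hex Hfin; split; [exact Hex|].
  intros x; destruct (Hfin x) as [L HL].
  exists (filter (fun w => classicb (factorization mul one P x w)) L); split.
  - apply Forall_forall; intros w Hw; apply filter_In in Hw as [_ Hw].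
    now destruct (classicbP (factorization mul one P x w)).
  - intros w Hw; exists w; split; [|apply wequiv_refl].
    apply filter_In; split; [now apply HL|].
    now destruct (classicbP (factorization mul one P x w)).
Qed.

Lemma idempotent_long_factorizations (P : M -> Prop) (x : M) (w : list M) :
  mul x x = x -> ~ unit_divisor mul one x -> factorization mul one P x w ->
  forall n, exists w', factorization mul one P x w' /\ n <= length w'.
Proof.
  intros Hxx Hx [HP Hw] n.
  induction n as [|n (w' & [HP' Hw'] & Hlen)].
  - exists w; split; [split; assumption | lia].
  - exists (w ++ w'); split; [split|].
    + now apply Forall_app.
    + now rewrite wprod_app, Hw, Hw'.
    + rewrite length_app; destruct w as [|a w].
      * simpl in Hw; subst x; contradiction (Hx unit_divisor_one).
      * simpl; lia.
Qed.

Lemma idempotent_not_BF_wrt (P : M -> Prop) (x : M) :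
  mul x x = x -> ~ unit_divisor mul one x -> ~ BF_wrt mul one P.
Proof.
  intros Hxx Hx [Hex Hbd].
  destruct (Hex x Hx) as [w Hw], (Hbd x) as [N HN].
  destruct (idempotent_long_factorizations Hxx Hx Hw (S N)) as (w' & Hw' & Hlen).
  specialize (HN w' Hw'); lia.
Qed.

End Factorizations.

Section Counting.
Variable T : Type.

Definition count_in (l : list T) (A : T -> Prop) : nat :=
  length (filter (fun y => classicb (A y)) l).

Lemma count_in_cons (a : T) (l : list T) (A : T -> Prop) :
  count_in (a :: l) A = (if classicb (A a) then 1 else 0) + count_in l A.
Proof. unfold count_in; simpl; now destruct (classicb (A a)). Qed.

Lemma count_in_le (l : list T) (A B : T -> Prop) :
  (forall y, A y -> B y) -> count_in l A <= count_in l B.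
Proof.
  intros HAB; induction l as [|a l IH]; [reflexivity|].
  rewrite !count_in_cons.
  destruct (classicbP (A a)) as [HA|], (classicbP (B a)) as [|HB]; try lia.
  contradiction (HB (HAB a HA)).
Qed.

Lemma count_in_lt (l : list T) (A B : T -> Prop) (y : T) :
  (forall y, A y -> B y) -> In y l -> B y -> ~ A y -> count_in l A < count_in l B.
Proof.
  intros HAB Hy HBy HAy; induction l as [|a l IH]; [destruct Hy|].
  rewrite !count_in_cons.
  destruct Hy as [->|Hy].
  - destruct (classicbP (A y)); [contradiction|].
    destruct (classicbP (B y)); [|contradiction].
    pose proof (count_in_le l A B HAB); lia.
  - specialize (IH Hy).
    destruct (classicbP (A a)) as [HA|], (classicbP (B a)) as [|HB]; try lia.
    contradiction (HB (HAB a HA)).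
Qed.

Fixpoint sublists (l : list T) : list (list T) :=
  match l with
  | [] => [[]]
  | a :: l' => map (cons a) (sublists l') ++ sublists l'
  end.

Lemma filter_In_sublists (f : T -> bool) (l : list T) : In (filter f l) (sublists l).
Proof.
  induction l as [|a l IH]; simpl; [now left|].
  apply in_or_app; destruct (f a); [left; now apply in_map | now right].
Qed.

Fixpoint words_upto (C : list T) (n : nat) : list (list T) :=
  match n with
  | 0 => [[]]
  | S n => [] :: flat_map (fun c => map (cons c) (words_upto C n)) C
  end.

Lemma In_words_upto (C : list T) (n : nat) (w : list T) :
  length w <= n -> incl w C -> In w (words_upto C n).
Proof.
  revert w; induction n as [|n IH]; intros [|a w] Hlen Hincl; simpl in *;
    [now left | lia | now left | right].
  apply in_flat_map; exists a; split; [apply Hincl; now left|].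
  apply in_map, IH; [lia | intros z Hz; apply Hincl; now right].
Qed.

End Counting.

Section SetMonoid.
Variable H : Monoid.
Local Notation one := (mone H).
Local Notation mul := (mmul H).
Local Notation Pprod := (wprod (@Pmul H) (Pone H)).
Local Notation nonunit X := (~ unit_divisor (@Pmul H) (Pone H) X).

Definition mem (X : Pfin1 H) : H -> Prop := proj1_sig X.

Definition Psub (X Y : Pfin1 H) : Prop := forall y, mem X y -> mem Y y.

Lemma mem_one (X : Pfin1 H) : mem X one.
Proof. exact (proj2 (proj2_sig X)). Qed.

Lemma mem_cover (X : Pfin1 H) : exists l, forall y, mem X y -> In y l.
Proof. exact (proj1 (proj2_sig X)). Qed.

Lemma Pfin1_ext (X Y : Pfin1 H) : Psub X Y -> Psub Y X -> X = Y.
Proof.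
  destruct X as [f Hf], Y as [g Hg]; unfold Psub, mem; simpl; intros HXY HYX.
  assert (f = g) as <-.
  { extensionality y; apply propositional_extensionality; split; auto. }
  f_equal; apply proof_irrelevance.
Qed.

Lemma Psub_Pmul_l (X Y : Pfin1 H) : Psub X (Pmul X Y).
Proof.
  intros x Hx; exists x, one; split; [|split]; [exact Hx | apply mem_one | now rewrite mmulm1].
Qed.

Lemma Psub_Pmul_r (X Y : Pfin1 H) : Psub Y (Pmul X Y).
Proof.
  intros y Hy; exists one, y; split; [|split]; [apply mem_one | exact Hy | now rewrite mmul1].
Qed.

Lemma Pmul_assoc (X Y Z : Pfin1 H) : Pmul X (Pmul Y Z) = Pmul (Pmul X Y) Z.
Proof.
  apply Pfin1_ext.
  - intros ? (x & ? & Hx & (y & z & Hy & Hz & ->) & ->).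
    exists (mul x y), z; split; [exists x, y; auto | split; [exact Hz | apply mmulA]].
  - intros ? (? & z & (x & y & Hx & Hy & ->) & Hz & ->).
    exists x, (mul y z); split; [exact Hx | split; [exists y, z; auto | symmetry; apply mmulA]].
Qed.

Lemma Pmul_1l (X : Pfin1 H) : Pmul (Pone H) X = X.
Proof.
  apply Pfin1_ext; [|apply Psub_Pmul_r].
  intros ? (o & x & -> & Hx & ->); now rewrite mmul1.
Qed.

Lemma Pmul_1r (X : Pfin1 H) : Pmul X (Pone H) = X.
Proof.
  apply Pfin1_ext; [|apply Psub_Pmul_l].
  intros ? (x & o & Hx & -> & ->); now rewrite mmulm1.
Qed.

Lemma Psub_Pprod (w : list (Pfin1 H)) (Z : Pfin1 H) : In Z w -> Psub Z (Pprod w).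
Proof.
  induction w as [|A w IH]; [destruct 1|].
  intros [<-|HZ]; [apply Psub_Pmul_l|].
  intros y Hy; apply Psub_Pmul_r, (IH HZ), Hy.
Qed.

Lemma nonunit_iff (X : Pfin1 H) : nonunit X <-> exists a, mem X a /\ a <> one.
Proof.
  split.
  - intros HX; apply NNPP; intros Htriv; apply HX.
    replace X with (Pone H); [exact (unit_divisor_one _ _ Pmul_1l)|].
    apply Pfin1_ext; [intros ? ->; apply mem_one|].
    intros y Hy; apply NNPP; eauto.
  - intros (a & Ha & Ha1) (A & B & HX).
    apply Ha1; change (mem (Pone H) a); rewrite HX.
    apply Psub_Pmul_l, Psub_Pmul_r, Ha.
Qed.

Lemma mpow_succ_r (x : H) (n : nat) : mpow H x (S n) = mul (mpow H x n) x.
Proof.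
  induction n as [|n IH]; simpl; [now rewrite mmul1, mmulm1|].
  simpl in IH; now rewrite <- mmulA, <- IH.
Qed.

Lemma mpow_add (x : H) (m n : nat) : mul (mpow H x m) (mpow H x n) = mpow H x (m + n).
Proof. induction m as [|m IH]; simpl; [apply mmul1 | now rewrite <- mmulA, IH]. Qed.

Lemma aperiodic_powers_escape (Q : Pfin1 H) (a : H) :
  aperiodic H -> a <> one -> exists n, ~ mem Q (mpow H a n).
Proof.
  intros Hap Ha; apply not_all_not_ex; intros Hall.
  apply (Hap a Ha); destruct (mem_cover Q) as [l Hl].
  exists l; intros y [n ->]; apply Hl, NNPP, Hall.
Qed.

Lemma Pmul_grows_l (A X : Pfin1 H) :
  aperiodic H -> nonunit A -> exists y, mem (Pmul A X) y /\ ~ mem X y.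
Proof.
  intros Hap HA; destruct (proj1 (nonunit_iff A) HA) as (a & Ha & Ha1).
  destruct (aperiodic_powers_escape X Hap Ha1) as [n Hn].
  apply NNPP; intros Hclosed; apply Hn; clear Hn.
  induction n as [|n IH]; [apply mem_one|].
  apply NNPP; intros Hn; apply Hclosed; exists (mpow H a (S n)); split; [|exact Hn].
  exists a, (mpow H a n); auto.
Qed.

Lemma Pmul_grows_r (X B : Pfin1 H) :
  aperiodic H -> nonunit B -> exists y, mem (Pmul X B) y /\ ~ mem X y.
Proof.
  intros Hap HB; destruct (proj1 (nonunit_iff B) HB) as (b & Hb & Hb1).
  destruct (aperiodic_powers_escape X Hap Hb1) as [n Hn].
  apply NNPP; intros Hclosed; apply Hn; clear Hn.
  induction n as [|n IH]; [apply mem_one|].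
  apply NNPP; intros Hn; apply Hclosed; exists (mpow H b (S n)); split; [|exact Hn].
  exists (mpow H b n), b; rewrite mpow_succ_r; auto.
Qed.

Lemma count_Pmul_lt_l (l : list H) (A X : Pfin1 H) :
  aperiodic H -> nonunit A -> (forall y, mem (Pmul A X) y -> In y l) ->
  count_in l (mem X) < count_in l (mem (Pmul A X)).
Proof.
  intros Hap HA Hl; destruct (Pmul_grows_l X Hap HA) as (y & Hy & HXy).
  exact (count_in_lt l _ _ y (Psub_Pmul_r A X) (Hl y Hy) Hy HXy).
Qed.

Lemma count_Pmul_lt_r (l : list H) (X B : Pfin1 H) :
  aperiodic H -> nonunit B -> (forall y, mem (Pmul X B) y -> In y l) ->
  count_in l (mem X) < count_in l (mem (Pmul X B)).
Proof.
  intros Hap HB Hl; destruct (Pmul_grows_r X Hap HB) as (y & Hy & HXy).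
  exact (count_in_lt l _ _ y (Psub_Pmul_l X B) (Hl y Hy) Hy HXy).
Qed.

Lemma length_le_count (l : list H) (w : list (Pfin1 H)) :
  aperiodic H -> Forall (fun Z => nonunit Z) w -> (forall y, mem (Pprod w) y -> In y l) ->
  length w <= count_in l (mem (Pprod w)).
Proof.
  intros Hap; induction w as [|A w IH]; intros Hw Hl; [apply le_0_n|].
  inversion_clear Hw as [|? ? HA Hw'].
  change (S (length w) <= count_in l (mem (Pmul A (Pprod w)))).
  assert (length w <= count_in l (mem (Pprod w))).
  { apply IH; [exact Hw'|]; intros y Hy; apply Hl, Psub_Pmul_r, Hy. }
  pose proof (@count_Pmul_lt_l l A (Pprod w) Hap HA Hl); lia.
Qed.

Lemma atomic_factorization_exists (X : Pfin1 H) :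
  aperiodic H -> nonunit X ->
  exists w, factorization (@Pmul H) (Pone H) (atom (@Pmul H) (Pone H)) X w.
Proof.
  intros Hap; destruct (mem_cover X) as [l Hl]; revert Hl.
  induction X as [X IH] using
    (well_founded_ind (well_founded_ltof _ (fun X => count_in l (mem X)))).
  intros Hl HX; destruct (classic (atom (@Pmul H) (Pone H) X)) as [Hat|Hat].
  - exists [X]; split; [constructor; [exact Hat | constructor] | apply Pmul_1r].
  - destruct (not_atom_split HX Hat) as (A & B & HA & HB & ->).
    assert (HlA : forall y, mem A y -> In y l) by (intros y Hy; apply Hl, Psub_Pmul_l, Hy).
    assert (HlB : forall y, mem B y -> In y l) by (intros y Hy; apply Hl, Psub_Pmul_r, Hy).
    destruct (IH A (count_Pmul_lt_r l Hap HB Hl) HlA HA) as (u & Hu & Hprod_u).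
    destruct (IH B (count_Pmul_lt_l l Hap HA Hl) HlB HB) as (v & Hv & Hprod_v).
    exists (u ++ v); split; [now apply Forall_app|].
    now rewrite (wprod_app _ _ Pmul_assoc Pmul_1l), Hprod_u, Hprod_v.
Qed.

Lemma Pfin1_of_list_spec (s : list H) :
  finite_set (fun y => In y s \/ y = one) /\ (In one s \/ one = one).
Proof. split; [exists (one :: s); intros y [Hy| ->]; simpl; auto | now right]. Qed.

Definition Pfin1_of_list (s : list H) : Pfin1 H := exist _ _ (Pfin1_of_list_spec s).

Lemma Psub_In_sublists (l : list H) (X Z : Pfin1 H) :
  (forall y, mem X y -> In y l) -> Psub Z X -> In Z (map Pfin1_of_list (sublists l)).
Proof.
  intros Hl HZX; apply in_map_iff.
  exists (filter (fun y => classicb (mem Z y)) l); split; [|apply filter_In_sublists].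
  apply Pfin1_ext.
  - intros y [Hy| ->]; [|apply mem_one].
    apply filter_In in Hy as [_ Hy]; now destruct (classicbP (mem Z y)).
  - intros y Hy; left; apply filter_In; split; [now apply Hl, HZX|].
    now destruct (classicbP (mem Z y)).
Qed.

Lemma factorizations_finite (P : Pfin1 H -> Prop) (X : Pfin1 H) :
  aperiodic H -> (forall Z, P Z -> nonunit Z) ->
  exists L, forall w, factorization (@Pmul H) (Pone H) P X w -> In w L.
Proof.
  intros Hap HP; destruct (mem_cover X) as [l Hl].
  exists (words_upto (map Pfin1_of_list (sublists l)) (count_in l (mem X))).
  intros w [Hw <-]; apply In_words_upto.
  - apply length_le_count; [exact Hap | exact (Forall_impl _ HP Hw) | exact Hl].
  - intros Z HZ; apply (Psub_In_sublists l Hl), Psub_Pprod, HZ.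
Qed.

Lemma aperiodic_FF_wrt (P : Pfin1 H -> Prop) :
  (forall Z, atom (@Pmul H) (Pone H) Z -> P Z) -> (forall Z, P Z -> nonunit Z) ->
  aperiodic H -> FF_wrt (@Pmul H) (Pone H) P.
Proof.
  intros Hatom HP Hap; apply (FF_wrt_of_finitely_many Pmul_1l Pmul_1r).
  - intros X HX; destruct (atomic_factorization_exists Hap HX) as (w & Hw & Hprod).
    exists w; split; [exact (Forall_impl _ Hatom Hw) | exact Hprod].
  - intros X; now apply factorizations_finite.
Qed.

Lemma BF_wrt_aperiodic (P : Pfin1 H -> Prop) : BF_wrt (@Pmul H) (Pone H) P -> aperiodic H.
Proof.
  intros HBF x Hx Hfin.
  set (S := exist _ (fun y => exists n, y = mpow H x n) (conj Hfin (ex_intro _ 0 eq_refl))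
            : Pfin1 H).
  assert (HSS : Pmul S S = S).
  { apply Pfin1_ext; [|apply Psub_Pmul_l].
    intros ? (? & ? & [m ->] & [n ->] & ->); exists (m + n); now rewrite mpow_add. }
  assert (HS : nonunit S).
  { apply nonunit_iff; exists x; split; [exists 1; simpl; now rewrite mmulm1 | exact Hx]. }
  exact (idempotent_not_BF_wrt Pmul_assoc Pmul_1l HSS HS HBF).
Qed.

Lemma aperiodic_iff_FF_wrt_BF_wrt (P : Pfin1 H -> Prop) :
  (forall Z, atom (@Pmul H) (Pone H) Z -> P Z) -> (forall Z, P Z -> nonunit Z) ->
  (aperiodic H <-> FF_wrt (@Pmul H) (Pone H) P) /\
  (aperiodic H <-> BF_wrt (@Pmul H) (Pone H) P).
Proof.
  intros Hatom HP; split; split.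
  - exact (aperiodic_FF_wrt P Hatom HP).
  - intros HFF; exact (BF_wrt_aperiodic (FF_wrt_BF_wrt HFF)).
  - intros Hap; exact (FF_wrt_BF_wrt (aperiodic_FF_wrt P Hatom HP Hap)).
  - apply BF_wrt_aperiodic.
Qed.

End SetMonoid.

Theorem proposition2p7 (H : Monoid) :
  (aperiodic H <-> BF_atomic (@Pmul H) (Pone H)) /\
  (aperiodic H <-> BF (@Pmul H) (Pone H)) /\
  (aperiodic H <-> FF (@Pmul H) (Pone H)) /\
  (aperiodic H <-> FF_atomic (@Pmul H) (Pone H)).
Proof.
  destruct (aperiodic_iff_FF_wrt_BF_wrt (atom (@Pmul H) (Pone H))
              (fun Z HZ => HZ) (fun Z HZ => proj1 HZ)) as [HFFa HBFa].
  destruct (aperiodic_iff_FF_wrt_BF_wrt (irreducible (@Pmul H) (Pone H))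
              (@atom_irreducible _ _ _) (fun Z HZ => proj1 HZ)) as [HFFi HBFi].
  exact (conj HBFa (conj HBFi (conj HFFi HFFa))).
Qed.
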